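(* Let $R$ be an integral domain of characteristic $0$ and let $Z$ be a $\Leftrightarrow_R$-connected set of roots of unity in $R$. Then for any nonempty subset $Z'\subset Z$ the homomorphism $\rho^R_{Z,Z'}\colon R[q]^Z\to R[q]^{Z'}$ is injective.
   Context: All rings are commutative with unit; $q$ is an indeterminate. For a set $M$ of monic polynomials in $R[q]$, let $M^*$ be the multiplicative set it generates, directed by divisibility, and $R[q]^M=\varprojlim_{f\in M^*}R[q]/(f)$. For a set $Z$ of roots of unity in $R$, $R[q]^Z:=R[q]^{M_Z}$ where $M_Z=\{q-\zeta:\zeta\in Z\}$; for $Z'\subset Z$, $\rho^R_{Z,Z'}$ is induced by the identity of $R[q]$. For roots of unity $\zeta,\zeta'\in R$ write $\zeta\Leftrightarrow_R\zeta'$ if $R$ is $(\zeta-\zeta')$-adically separated, i.e. $\bigcap_{j\ge0}(\zeta-\zeta')^jR=(0)$ (equivalently, $\operatorname{ord}(\zeta^{-1}\zeta')$ is a power of a prime $p$ with $\bigcap_j p^jR=(0)$). A set $Z$ is $\Leftrightarrow_R$-connected if it is nonempty and any two elements are joined by a finite chain in $Z$ with consecutive elements related by $\Leftrightarrow_R$. *)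

From HB Require Import structures.
From mathcomp Require Import all_boot all_order all_algebra.
Set Implicit Arguments. Unset Strict Implicit. Unset Printing Implicit Defensive.
Import Order.TTheory GRing.Theory Num.Theory.
Local Open Scope ring_scope.

Definition pdvd (R : comNzRingType) (f g : {poly R}) : Prop :=
  exists h : {poly R}, g = h * f.

Definition mulset (R : comNzRingType) (M : {poly R} -> Prop) (f : {poly R}) : Prop :=
  exists s : seq {poly R}, (forall g, g \in s -> M g) /\ f = \prod_(g <- s) g.

Definition MZ (R : comNzRingType) (Z : R -> Prop) (f : {poly R}) : Prop :=
  exists2 z, Z z & f = 'X - z%:P.

(* Concrete model of R[q]^M = lim_{f in M^*} R[q]/(f): an element is given by a
   family of representatives x f (of the class in R[q]/(f)), compatible along
   divisibility; two such families define the same element iff they agree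
   modulo f for every f in M^*. *)
Definition compatible (R : comNzRingType) (M : {poly R} -> Prop)
  (x : {poly R} -> {poly R}) : Prop :=
  forall f g, mulset M f -> mulset M g -> pdvd f g -> pdvd f (x g - x f).

Definition lim_eq (R : comNzRingType) (M : {poly R} -> Prop)
  (x y : {poly R} -> {poly R}) : Prop :=
  forall f, mulset M f -> pdvd f (x f - y f).

Definition rho_injective (R : comNzRingType) (Z Z' : R -> Prop) : Prop :=
  forall x y, compatible (MZ Z) x -> compatible (MZ Z) y ->
    lim_eq (MZ Z') x y -> lim_eq (MZ Z) x y.

Definition is_root_of_unity (R : comNzRingType) (z : R) : Prop :=
  exists2 n : nat, (0 < n)%N & z ^+ n = 1.

(* zeta <=>_R zeta' : R is (zeta - zeta')-adically separated. *)
Definition adic_rel (R : comNzRingType) (z z' : R) : Prop :=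
  forall x : R, (forall j : nat, exists y : R, x = (z - z') ^+ j * y) -> x = 0.

Inductive zchain (R : comNzRingType) (Z : R -> Prop) : R -> R -> Prop :=
  | zchain_refl a : zchain Z a a
  | zchain_step a b c : Z b -> adic_rel a b -> zchain Z b c -> zchain Z a c.

Definition adic_connected (R : comNzRingType) (Z : R -> Prop) : Prop :=
  (exists z, Z z) /\ forall a b, Z a -> Z b -> zchain Z a b.

From mathcomp Require Import all_boot all_order all_algebra.
From mathcomp Require Import ring.
Import GRing.Theory.
Local Open Scope ring_scope.
Set Implicit Arguments. Unset Strict Implicit.

(* Put d = x - y, a compatible family for M_Z which vanishes modulo every
   f in M_{Z'}^*. Say d vanishes at z if (q - z)^n divides d((q - z)^n) for
   all n, i.e. the image of d in R[[q - z]] is zero. It vanishes at the points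
   of Z', and this propagates along the relation: if a <=> b, write
   d((q - b)^n) = (q - b)^k e; compatibility along (q - b)^n (q - a)^(j + k)
   makes (q - a)^(j + k) divide (q - b)^k (e + r (q - b)^(n - k)), so that
   (a - b)^j divides e(b) for every j, and e(b) = 0 by separatedness. Once d
   vanishes at every point of Z, it vanishes modulo every product of powers of
   distinct q - z, because q - z cannot be cancelled against a factor that
   does not vanish at z. *)

Section Divisibility.
Variable R : comNzRingType.
Implicit Types (f g a b : {poly R}).

Lemma pdvdD f a b : pdvd f a -> pdvd f b -> pdvd f (a + b).
Proof. by move=> [h ->] [k ->]; exists (h + k); rewrite mulrDl. Qed.

Lemma pdvdB f a b : pdvd f a -> pdvd f b -> pdvd f (a - b).
Proof. by move=> [h ->] [k ->]; exists (h - k); rewrite mulrBl. Qed.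

Lemma mulsetM (M : {poly R} -> Prop) f g :
  mulset M f -> mulset M g -> mulset M (f * g).
Proof.
move=> [s [Ms ->]] [t [Mt ->]]; exists (s ++ t); split; last by rewrite big_cat.
by move=> h; rewrite mem_cat => /orP [/Ms|/Mt].
Qed.

Lemma mulsetX (M : {poly R} -> Prop) g n : M g -> mulset M (g ^+ n).
Proof.
move=> Mg; exists (nseq n g); split; first by move=> h /nseqP [->].
by rewrite big_nseq -Monoid.iteropE.
Qed.

Lemma compatibleB (M : {poly R} -> Prop) x y :
  compatible M x -> compatible M y -> compatible M (fun f => x f - y f).
Proof.
move=> cx cy f g Mf Mg fg.
have -> : x g - y g - (x f - y f) = x g - x f - (y g - y f) by ring.
exact: pdvdB (cx f g Mf Mg fg) (cy f g Mf Mg fg).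
Qed.

Lemma mulset_MZ (Z : R -> Prop) f : mulset (MZ Z) f ->
  exists2 rs : seq R, forall z, z \in rs -> Z z &
    f = \prod_(z <- rs) ('X - z%:P).
Proof.
move=> [s [Ms ->]]; elim: s Ms => [|g s IHs] Ms; first by exists [::]; rewrite ?big_nil.
rewrite big_cons; have [z Zz ->] := Ms g (mem_head g s).
have [|rs Zrs ->] := IHs; first by move=> h hs; apply: Ms; rewrite inE hs orbT.
exists (z :: rs); last by rewrite big_cons.
by move=> w; rewrite inE => /orP [/eqP ->|/Zrs].
Qed.

Lemma mulset_MZ_uniq (Z : R -> Prop) f : mulset (MZ Z) f ->
  exists (u : seq R) (c : R -> nat), [/\ uniq u, forall z, z \in u -> Z z &
    f = \prod_(z <- u) ('X - z%:P) ^+ c z].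
Proof.
move=> /mulset_MZ [rs Zrs ->]; exists (undup rs), (fun z => count_mem z rs).
split; [exact: undup_uniq | by move=> z; rewrite mem_undup => /Zrs |].
by rewrite -big_undup_iterop_count.
Qed.

End Divisibility.

Section RootsOfFactors.
Variable R : idomainType.
Implicit Types (g h w : {poly R}) (z : R).

Lemma pdvd_XsubC_exp_cancel z k g h :
  g.[z] != 0 -> pdvd (('X - z%:P) ^+ k) (g * h) -> pdvd (('X - z%:P) ^+ k) h.
Proof.
move=> gz; elim: k h => [|k IHk] h; first by exists h; rewrite mulr1.
move=> [p gh].
have : root h z.
  have : (g * h).[z] = 0 by rewrite gh hornerM horner_exp hornerXsubC subrr expr0n mulr0.
  by rewrite hornerM => /eqP; rewrite mulf_eq0 (negPf gz).
move: gh => /[swap] /factor_theorem [h' ->] gh.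
have [|p' ->] := IHk h'.
  exists p; apply: (@mulIf _ ('X - z%:P)); first by rewrite polyXsubC_eq0.
  by rewrite -mulrA gh exprSr mulrA.
by exists p'; rewrite exprSr mulrA.
Qed.

Lemma pdvd_prod_XsubC_exp (u : seq R) (c : R -> nat) h : uniq u ->
  (forall z, z \in u -> pdvd (('X - z%:P) ^+ c z) h) ->
  pdvd (\prod_(z <- u) ('X - z%:P) ^+ c z) h.
Proof.
elim: u h => [|z u IHu] h /=; first by exists h; rewrite big_nil mulr1.
move=> /andP [zu uu] dvd_h.
have [|p hE] := IHu h uu; first by move=> v vu; apply: dvd_h; rewrite inE vu orbT.
have uz : (\prod_(w <- u) ('X - w%:P) ^+ c w).[z] != 0.
  rewrite horner_prod prodf_seq_neq0; apply/allP => w wu /=.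
  rewrite horner_exp hornerXsubC expf_neq0 // subr_eq0.
  by apply: contraNneq zu => ->.
have [p' pE] : pdvd (('X - z%:P) ^+ c z) p.
  by apply: pdvd_XsubC_exp_cancel uz _; rewrite mulrC -hE; apply: dvd_h; rewrite mem_head.
by exists p'; rewrite hE pE big_cons mulrA.
Qed.

Lemma pdvd_XsubC_exp_horner a b j k w : a != b ->
  pdvd (('X - a%:P) ^+ (j + k)) (('X - b%:P) ^+ k * w) ->
  exists y, w.[b] = (a - b) ^+ j * y.
Proof.
move=> ab; elim: k j w => [|k IHk] j w [h].
  rewrite expr0 mul1r addn0 => ->; exists (h.[b] * (-1) ^+ j).
  by rewrite hornerM horner_exp hornerXsubC -[b - a]opprB (exprNn (a - b)) mulrA mulrC.
move=> whE.
have /factor_theorem [h' hE] : root h b.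
  have : (h * ('X - a%:P) ^+ (j + k.+1)).[b] = 0.
    by rewrite -whE hornerM horner_exp hornerXsubC subrr expr0n mul0r.
  rewrite hornerM horner_exp hornerXsubC => /eqP.
  by rewrite mulf_eq0 expf_eq0 subr_eq0 [b == a]eq_sym (negPf ab) andbF orbF.
have [|y ->] := IHk j.+1 w.
  exists h'; apply: (@mulIf _ ('X - b%:P)); first by rewrite polyXsubC_eq0.
  by rewrite mulrAC -exprSr whE hE addSnnS mulrAC.
by exists ((a - b) * y); rewrite exprSr mulrA.
Qed.

End RootsOfFactors.

Section CompatibleFamilies.
Variables (R : idomainType) (Z : R -> Prop) (d : {poly R} -> {poly R}).
Hypothesis compatible_d : compatible (MZ Z) d.

Definition vanishes_at z :=
  forall n, pdvd (('X - z%:P) ^+ n) (d (('X - z%:P) ^+ n)).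

Lemma vanishes_at_mod a b n m : Z a -> Z b -> vanishes_at a ->
  exists r, pdvd (('X - a%:P) ^+ m) (d (('X - b%:P) ^+ n) + r * ('X - b%:P) ^+ n).
Proof.
move=> Za Zb van_a.
have MZa : mulset (MZ Z) (('X - a%:P) ^+ m) by apply: mulsetX; exists a.
have MZb : mulset (MZ Z) (('X - b%:P) ^+ n) by apply: mulsetX; exists b.
have MZab := mulsetM MZb MZa.
have [r rE] := compatible_d MZb MZab (ex_intro _ _ (mulrC _ _)).
exists r; have -> : d (('X - b%:P) ^+ n) + r * ('X - b%:P) ^+ n
                    = d (('X - b%:P) ^+ n * ('X - a%:P) ^+ m).
  by rewrite -rE; ring.
have := pdvdD (compatible_d MZa MZab (ex_intro _ _ erefl)) (van_a m).
by rewrite subrK.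
Qed.

Lemma vanishes_at_adic a b :
  Z a -> Z b -> adic_rel a b -> vanishes_at a -> vanishes_at b.
Proof.
move=> Za Zb sep_ab van_a; have [<-|ab] := eqVneq a b; first by [].
move=> n; suff dvd_k k : (k <= n)%N -> pdvd (('X - b%:P) ^+ k) (d (('X - b%:P) ^+ n)).
  exact: dvd_k.
elim: k => [|k IHk] kn; first by exists (d (('X - b%:P) ^+ n)); rewrite mulr1.
have [e eE] := IHk (ltnW kn).
have /factor_theorem [e' e'E] : root e b.
  apply/eqP/sep_ab => j; have [r] := vanishes_at_mod n (j + k) Za Zb van_a.
  rewrite eE; have -> : e * ('X - b%:P) ^+ k + r * ('X - b%:P) ^+ n
                      = ('X - b%:P) ^+ k * (e + r * ('X - b%:P) ^+ (n - k)).
    by rewrite -{1}(subnKC (ltnW kn)) exprD; ring.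
  move=> /(pdvd_XsubC_exp_horner ab) [y].
  rewrite hornerD hornerM horner_exp hornerXsubC subrr expr0n subn_eq0 leqNgt kn.
  by rewrite mulr0 addr0 => ->; exists y.
by exists e'; rewrite eE e'E exprS; ring.
Qed.

Lemma vanishes_at_chain a b : zchain Z a b -> Z a -> vanishes_at a -> vanishes_at b.
Proof.
elim=> [//|a0 b0 c0 Zb0 sep _ IH] Za0 van_a0.
exact: IH Zb0 (vanishes_at_adic Za0 Zb0 sep van_a0).
Qed.

Lemma pdvd_compatible_mulset :
  (forall z, Z z -> vanishes_at z) -> forall f, mulset (MZ Z) f -> pdvd f (d f).
Proof.
move=> van f Mf; have [u [c [uu Zu fE]]] := mulset_MZ_uniq Mf.
rewrite [X in pdvd X _]fE; apply: pdvd_prod_XsubC_exp => // z zu.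
have Mz : mulset (MZ Z) (('X - z%:P) ^+ c z) by apply: mulsetX; exists z => //; exact: Zu.
have zf : pdvd (('X - z%:P) ^+ c z) f.
  by exists (\prod_(w <- u | w != z) ('X - w%:P) ^+ c w); rewrite fE (bigD1_seq z) // mulrC.
by have := pdvdD (compatible_d Mz Mf zf) (van z (Zu z zu) (c z)); rewrite subrK.
Qed.

End CompatibleFamilies.

Theorem theorem5p2 (R : idomainType) (Z Z' : R -> Prop) :
  [pchar R] =i pred0 ->
  (forall z, Z z -> is_root_of_unity z) ->
  adic_connected Z ->
  (exists z, Z' z) ->
  (forall z, Z' z -> Z z) ->
  rho_injective Z Z'.
Proof.
move=> _ _ [_ connZ] [z0 Z'z0] Z'Z x y cx cy xy_Z'.
have Zz0 := Z'Z z0 Z'z0.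
have cd := compatibleB cx cy.
have van_z0 : vanishes_at (fun f => x f - y f) z0.
  by move=> n; apply: xy_Z'; apply: mulsetX; exists z0.
have van_Z z : Z z -> vanishes_at (fun f => x f - y f) z.
  by move=> Zz; exact: vanishes_at_chain (connZ z0 z Zz0 Zz) Zz0 van_z0.
exact: pdvd_compatible_mulset cd van_Z.
Qed.
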